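(* Let $\Gamma=(\gamma_{i,j})\in\mathcal{M}_n(\mathbb{R})$ be symmetric with entries in $[0,1]$, zero diagonal, and at least one strictly positive off-diagonal entry in each row. Let $\boldsymbol{\eta}=\Gamma\mathbf{1}_n$, $L=\operatorname{diag}(\boldsymbol{\eta})-\Gamma$, let $\lambda,\mu>0$, and $A=(a_{i,j})=\lambda\mathsf{I}_n+\mu L$. Define $\mathsf{P}_a\coloneqq\lambda\mathsf{I}_n+\mu\operatorname{diag}(\boldsymbol{\eta})$ and $\mathsf{P}_b\coloneqq\operatorname{diag}\big([\sum_{j=1}^n a_{i,j}^2]^{1/2}\big)_{i=1,\dots,n}$. Then every eigenvalue $\theta$ of $\mathsf{P}_b^{-1}A$ satisfies \[ 2^{-1/2}\,\lambda_{\min}(\mathsf{P}_a^{-1}A)\le\theta\le\lambda_{\max}(\mathsf{P}_a^{-1}A). \]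
   Context: $\mathbf{1}_n$ is the all-ones vector and $\mathsf{I}_n$ the identity. $\lambda_{\min}(M)$ and $\lambda_{\max}(M)$ denote the smallest and largest eigenvalues of $M$ (the matrices $\mathsf{P}^{-1}A$ here are similar to symmetric positive definite matrices, so their eigenvalues are real and positive). *)

From mathcomp Require Import all_boot all_order all_algebra.
Set Implicit Arguments. Unset Strict Implicit. Unset Printing Implicit Defensive.
Import Order.TTheory GRing.Theory Num.Theory.
Local Open Scope ring_scope.

(* Eigenvalues are those of
   mxalgebra ([eigenvalue M a] : there is a nonzero v with v *m M = a *: v). *)
Definition is_lambda_min (R : realFieldType) (n : nat) (M : 'M[R]_n) (m : R) :=
  eigenvalue M m /\ forall t, eigenvalue M t -> m <= t.

Definition is_lambda_max (R : realFieldType) (n : nat) (M : 'M[R]_n) (m : R) :=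
  eigenvalue M m /\ forall t, eigenvalue M t -> t <= m.

From mathcomp Require Import all_boot all_order all_algebra.
From mathcomp Require Import complex spectral lra.
Set Implicit Arguments. Unset Strict Implicit. Unset Printing Implicit Defensive.
Import Order.TTheory GRing.Theory Num.Theory.
Local Open Scope ring_scope.

(* If theta is an eigenvalue of Pb^-1 A, a (left)
   eigenvector v gives w := v Pb^-1 with w A = theta w Pb, hence
   w A w^T = theta w Pb w^T.  Congruence by Pa^(-1/2) turns Pa^-1 A into a
   symmetric matrix with the same spectrum, so its Rayleigh quotients give
   lmin w Pa w^T <= w A w^T <= lmax w Pa w^T.  Since A is diagonally dominant
   with diagonal Pa, every row norm of A lies between a_ii and sqrt 2 a_ii,
   i.e. Pa <= Pb <= sqrt 2 Pa; positive definiteness of A (L is a graph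
   Laplacian) makes theta positive, and the bounds follow. *)

Definition qform (R : comPzRingType) n (M : 'M[R]_n) (x : 'rV[R]_n) : R :=
  (x *m M *m x^T) 0 0.

Section QuadraticForm.
Variables (R : comPzRingType) (n : nat).
Implicit Types (M N : 'M[R]_n) (x : 'rV[R]_n).

Lemma qformE M x : qform M x = \sum_i \sum_j x 0 i * M i j * x 0 j.
Proof.
rewrite /qform mxE exchange_big; apply: eq_bigr => i _.
by rewrite !mxE mulr_suml; apply: eq_bigr.
Qed.

Lemma qformD M N x : qform (M + N) x = qform M x + qform N x.
Proof. by rewrite /qform mulmxDr mulmxDl mxE. Qed.

Lemma qformB M N x : qform (M - N) x = qform M x - qform N x.
Proof. by rewrite /qform mulmxBr mulmxBl !mxE. Qed.

Lemma qformZ a M x : qform (a *: M) x = a * qform M x.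
Proof. by rewrite /qform -scalemxAr -scalemxAl mxE. Qed.

Lemma qform_mulmx (P : 'M[R]_n) M x :
  qform (P *m M *m P^T) x = qform M (x *m P).
Proof. by rewrite /qform trmx_mul !mulmxA. Qed.

Lemma qform_diag (d : 'rV[R]_n) x :
  qform (diag_mx d) x = \sum_i d 0 i * x 0 i ^+ 2.
Proof.
rewrite /qform mul_mx_diag mxE; apply: eq_bigr => i _.
by rewrite !mxE mulrAC mulrC -expr2.
Qed.

End QuadraticForm.

Lemma qform_delta (R : comPzRingType) n (M : 'M[R]_n) i :
  qform M (delta_mx 0 i) = M i i.
Proof. by rewrite /qform -rowE trmx_delta -colE !mxE. Qed.

Lemma qform_diag_gt0 (R : realFieldType) n (d x : 'rV[R]_n) :
  (forall i, 0 < d 0 i) -> x != 0 -> 0 < qform (diag_mx d) x.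
Proof.
move=> d_gt0 x_neq0; have [i xi_neq0] : exists i, x 0 i != 0.
  apply/existsP; apply: contraNT x_neq0 => /existsPn x0.
  by apply/eqP/rowP => i; rewrite mxE; apply/eqP/negbNE/x0.
rewrite qform_diag (bigD1 i) //= ltr_pwDl ?sumr_ge0 // => [|j _].
  by rewrite mulr_gt0 // exprn_even_gt0.
by rewrite mulr_ge0 ?sqr_ge0 ?ltW.
Qed.

(* The spectral theorem is only available over an algebraically closed field,
   hence the detour through [complex R]. *)
Section SymmetricRayleigh.
Variable R : rcfType.
Local Notation C := (complex R).
Local Notation toC := (real_complex R).
Local Open Scope sesquilinear_scope.

Lemma real_complex_conj (r : R) : (toC r)^* = toC r.
Proof. by apply: conj_Creal; apply/complex_realP; exists r. Qed.

Lemma map_real_complex_hermsym n (S : 'M[R]_n) :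
  S^T = S -> map_mx toC S \is hermsymmx.
Proof.
move=> S_sym; apply/is_hermitianmxP; rewrite expr0 scale1r.
by apply/matrixP=> i j; rewrite !mxE real_complex_conj -[in LHS]S_sym mxE.
Qed.

Lemma hermsym_spectral_eigenvalue n (S : 'M[C]_n) j :
  S \is hermsymmx -> eigenvalue S (spectral_diag S 0 j).
Proof.
move=> /hermitian_normalmx/orthomx_spectralP S_spec.
set U := spectralmx S in S_spec.
have U_unit : U \in unitmx by exact: spectral_unit.
apply/eigenvalueP; exists (row j U).
  rewrite -row_mul {1}S_spec !mulmxA mulmxV // mul1mx row_mul row_diag_mx.
  by rewrite -scalemxAl -rowE.
apply/eqP => /(congr1 (mulmx^~ (invmx U))); rewrite -row_mul mulmxV // mul0mx.
by move=> /matrixP /(_ 0 j); rewrite !mxE eqxx => /eqP; rewrite oner_eq0.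
Qed.

Lemma hermsym_spectral_coords n (S : 'M[C]_n) (x : 'rV[C]_n) :
  S \is hermsymmx ->
  let y := x *m (spectralmx S)^t* in
  (x *m S *m x^t*) 0 0 = \sum_j spectral_diag S 0 j * (y 0 j * (y 0 j)^*) /\
  (x *m x^t*) 0 0 = \sum_j y 0 j * (y 0 j)^*.
Proof.
move=> /hermitian_normalmx/orthomx_spectralP S_spec.
set U := spectralmx S in S_spec *; set d := spectral_diag S in S_spec *.
move=> y.
have U_inv : invmx U = U^t* by apply/invmx_unitary/spectral_unitarymx.
have Ux : U *m x^t* = y^t* by rewrite /y trmx_mul map_mxM trmxCK.
split.
  rewrite S_spec U_inv !mulmxA -!mulmxA Ux mulmxA -/y mulmxA mul_mx_diag mxE.
  by apply: eq_bigr => j _; rewrite !mxE mulrA [_ * d 0 j]mulrC.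
rewrite -{1}(mulmx1 x) -(mulVmx (spectral_unit S)) -/U U_inv.
by rewrite !mulmxA -/y -mulmxA Ux mxE; apply: eq_bigr => j _; rewrite !mxE.
Qed.

Lemma sym_qform_bounds n (S : 'M[R]_n) (m M : R) (x : 'rV[R]_n) : S^T = S ->
  (forall t, eigenvalue S t -> m <= t <= M) ->
  m * qform 1%:M x <= qform S x <= M * qform 1%:M x.
Proof.
move=> S_sym S_spec; set SC := map_mx toC S; set xC := map_mx toC x.
have SC_herm : SC \is hermsymmx by exact: map_real_complex_hermsym.
have xC_adj : xC^t* = map_mx toC x^T.
  by apply/matrixP => i j; rewrite !mxE real_complex_conj.
have qS : toC (qform S x) = (xC *m SC *m xC^t*) 0 0.
  by rewrite xC_adj -!map_mxM mxE.
have q1 : toC (qform 1%:M x) = (xC *m xC^t*) 0 0.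
  by rewrite xC_adj /qform mulmx1 -map_mxM [RHS]mxE.
have [qSE q1E] := hermsym_spectral_coords xC SC_herm.
set d := spectral_diag SC in qSE; set y := xC *m _ in qSE q1E.
have d_bounds j : toC m <= d 0 j <= toC M.
  have d_real : d 0 j \is Num.real.
    by have /mxOverP := hermitian_spectral_diag_real SC_herm; apply.
  have d_Re : toC (complex.Re (d 0 j)) = d 0 j by exact: RRe_real.
  rewrite -d_Re !lecR; apply: S_spec.
  by have := hermsym_spectral_eigenvalue j SC_herm; rewrite -d_Re eigenvalue_map.
rewrite -!lecR !rmorphM /= qS q1 qSE q1E !mulr_sumr.
by apply/andP; split; apply: ler_sum => j _;
  rewrite ler_wpM2r ?mul_conjC_ge0 //; case/andP: (d_bounds j).
Qed.

End SymmetricRayleigh.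

Lemma eigenvalue_similar (F : fieldType) n (P M : 'M[F]_n) a :
  P \in unitmx -> eigenvalue (P *m M *m invmx P) a -> eigenvalue M a.
Proof.
move=> P_unit /eigenvalueP [u uPMP u_neq0]; apply/eigenvalueP; exists (u *m P).
  by rewrite scalemxAl -uPMP !mulmxA mulmxKV.
by apply: contraNneq u_neq0 => uP0; rewrite -(mulmxK P_unit u) uP0 mul0mx.
Qed.

Section DiagonalCongruence.
Variables (R : rcfType) (n : nat) (d : 'rV[R]_n).
Hypothesis d_gt0 : forall i, 0 < d 0 i.

Let D : 'M[R]_n := diag_mx (\row_i Num.sqrt (d 0 i)).

Let D_sym : D^T = D. Proof. exact: tr_diag_mx. Qed.

Let D_sqr : D *m D = diag_mx d.
Proof.
rewrite mulmx_diag; congr diag_mx; apply/rowP => i.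
by rewrite !mxE -expr2 sqr_sqrtr ?ltW.
Qed.

Let D_unit : D \in unitmx.
Proof.
rewrite unitmxE det_diag unitfE; apply/prodf_neq0 => i _.
by rewrite mxE gt_eqF ?sqrtr_gt0.
Qed.

Lemma qform_bounds_diag_inv (A : 'M[R]_n) (m M : R) (x : 'rV[R]_n) :
  A^T = A ->
  (forall t, eigenvalue (invmx (diag_mx d) *m A) t -> m <= t <= M) ->
  m * qform (diag_mx d) x <= qform A x <= M * qform (diag_mx d) x.
Proof.
move=> A_sym spec; set E := invmx D.
have E_sym : E^T = E by rewrite trmx_inv D_sym.
pose S := E *m A *m E.
have S_sym : S^T = S by rewrite !trmx_mul E_sym A_sym mulmxA.
have DSD : D *m S *m D^T = A.
  by rewrite D_sym !mulmxA mulmxV // mul1mx mulmxKV.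
have S_spec t : eigenvalue S t -> m <= t <= M.
  move=> St; apply: spec; apply: (eigenvalue_similar D_unit).
  have DD_unit : D *m D \in unitmx by rewrite unitmx_mul D_unit.
  have DD_inv : invmx (D *m D) = E *m E.
    rewrite -[RHS]mulmx1 -(mulmxV DD_unit) !mulmxA -(mulmxA E E D).
    by rewrite mulVmx // mulmx1 mulVmx // mul1mx.
  by rewrite -D_sqr DD_inv !mulmxA mulmxV // mul1mx.
have := sym_qform_bounds (x *m D) S_sym S_spec.
by rewrite -!qform_mulmx DSD mulmx1 D_sym D_sqr.
Qed.

End DiagonalCongruence.

Lemma diag_preconditioner_eigenvalue_bounds (R : rcfType) n (A : 'M[R]_n)
    (d e : 'rV[R]_n) (c theta lmin lmax : R) :
  A^T = A -> (forall x, x != 0 -> 0 < qform A x) ->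
  (forall i, 0 < d 0 i) -> (forall i, d 0 i <= e 0 i <= c * d 0 i) ->
  eigenvalue (invmx (diag_mx e) *m A) theta ->
  is_lambda_min (invmx (diag_mx d) *m A) lmin ->
  is_lambda_max (invmx (diag_mx d) *m A) lmax ->
  c^-1 * lmin <= theta /\ theta <= lmax.
Proof.
move=> A_sym A_pd d_gt0 de_bounds /eigenvalueP [v vEA v_neq0].
move=> [_ lmin_le] [_ le_lmax].
have E_unit : diag_mx e \in unitmx.
  rewrite unitmxE det_diag unitfE; apply/prodf_neq0 => i _.
  by have /andP[/(lt_le_trans (d_gt0 i)) /gt_eqF -> _] := de_bounds i.
set w := v *m invmx (diag_mx e).
have wE : w *m diag_mx e = v by rewrite mulmxKV.
have w_neq0 : w != 0 by apply: contraNneq v_neq0 => w0; rewrite -wE w0 mul0mx.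
have qA : qform A w = theta * qform (diag_mx e) w.
  by rewrite /qform -(mulmxA v) vEA -wE -scalemxAl mxE.
have spec t : eigenvalue (invmx (diag_mx d) *m A) t -> lmin <= t <= lmax.
  by move=> Ht; rewrite lmin_le ?le_lmax.
have /andP[lmin_qA qA_lmax] := qform_bounds_diag_inv d_gt0 w A_sym spec.
have qd_qe : qform (diag_mx d) w <= qform (diag_mx e) w.
  rewrite !qform_diag; apply: ler_sum => i _.
  by apply: ler_wpM2r; [exact: sqr_ge0 | case/andP: (de_bounds i)].
have qe_qd : qform (diag_mx e) w <= c * qform (diag_mx d) w.
  rewrite !qform_diag mulr_sumr; apply: ler_sum => i _.
  rewrite [c * _]mulrA; apply: ler_wpM2r; first exact: sqr_ge0.
  by case/andP: (de_bounds i).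
have qd_gt0 := qform_diag_gt0 d_gt0 w_neq0.
have qA_gt0 := A_pd w w_neq0.
move: qA lmin_qA qA_lmax qd_qe qe_qd qd_gt0 qA_gt0.
move: (qform A w) (qform (diag_mx d) w) (qform (diag_mx e) w) => a b g.
move=> -> lmin_b lmax_b b_g g_cb b_gt0 a_gt0.
have c_gt0 : 0 < c by rewrite -(pmulr_lgt0 _ b_gt0); lra.
have theta_gt0 : 0 < theta by rewrite -(pmulr_lgt0 _ (lt_le_trans b_gt0 b_g)).
split; first rewrite -(ler_pM2l c_gt0) mulrA mulfV ?gt_eqF // mul1r.
  by rewrite -(ler_pM2r b_gt0); nra.
by rewrite -(ler_pM2r (lt_le_trans b_gt0 b_g)); nra.
Qed.

Lemma diag_dominant_row_norm_bounds (R : rcfType) n (A : 'M[R]_n) i :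
  \sum_(j | j != i) `|A i j| <= A i i ->
  A i i <= Num.sqrt (\sum_j A i j ^+ 2) <= Num.sqrt 2 * A i i.
Proof.
set s := \sum_(j | j != i) _ => s_le.
have s_ge0 : 0 <= s by rewrite sumr_ge0.
have Aii_ge0 : 0 <= A i i := le_trans s_ge0 s_le.
have off_le : \sum_(j | j != i) A i j ^+ 2 <= A i i ^+ 2.
  apply: (@le_trans _ _ (\sum_(j | j != i) `|A i j| * s)).
    apply: ler_sum => j ji; rewrite -real_normK ?num_real // expr2.
    by apply: ler_wpM2l => //; rewrite /s (bigD1 j) //= lerDl sumr_ge0.
  by rewrite -mulr_suml -/s expr2; apply: ler_pM.
have off_ge0 : 0 <= \sum_(j | j != i) A i j ^+ 2.
  by rewrite sumr_ge0 // => j _; apply: sqr_ge0.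
rewrite (bigD1 i) //= -[in X in X <= _ <= _](ger0_norm Aii_ge0) -sqrtr_sqr.
rewrite -[in X in _ <= _ <= X](ger0_norm Aii_ge0) -sqrtr_sqr -sqrtrM //.
by rewrite !ler_sqrt ?mulr_ge0 ?addr_ge0 ?sqr_ge0 //; apply/andP; split; lra.
Qed.

Theorem row_norm_preconditioner_eigenvalue_bounds (R : rcfType) n (A : 'M[R]_n)
    (theta lmin lmax : R) :
  A^T = A -> (forall x, x != 0 -> 0 < qform A x) ->
  (forall i, \sum_(j | j != i) `|A i j| <= A i i) ->
  eigenvalue (invmx (diag_mx (\row_i Num.sqrt (\sum_j A i j ^+ 2))) *m A) theta ->
  is_lambda_min (invmx (diag_mx (\row_i A i i)) *m A) lmin ->
  is_lambda_max (invmx (diag_mx (\row_i A i i)) *m A) lmax ->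
  (Num.sqrt 2)^-1 * lmin <= theta /\ theta <= lmax.
Proof.
move=> A_sym A_pd A_dom; apply: diag_preconditioner_eigenvalue_bounds => // i.
  rewrite mxE -qform_delta A_pd //; apply/eqP => /matrixP /(_ 0 i).
  by rewrite !mxE !eqxx => /eqP; rewrite oner_eq0.
by rewrite !mxE; apply: diag_dominant_row_norm_bounds.
Qed.

Definition laplacian (R : pzRingType) n (G : 'M[R]_n) : 'M[R]_n :=
  diag_mx (G *m const_mx 1)^T - G.

Section ShiftedLaplacian.
Variables (R : realFieldType) (n : nat) (G : 'M[R]_n).
Hypotheses (G_sym : G^T = G) (G_ge0 : forall i j, 0 <= G i j).

Lemma laplacianE i j : laplacian G i j = (\sum_k G i k) *+ (i == j) - G i j.
Proof.
by rewrite !mxE; congr (_ *+ _ - _); apply: eq_bigr => k _; rewrite !mxE mulr1.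
Qed.

Lemma laplacian_qform_ge0 x : 0 <= qform (laplacian G) x.
Proof.
set H := qform (diag_mx (G *m const_mx 1)^T) x.
have H_rows : H = \sum_i \sum_j G i j * x 0 i ^+ 2.
  rewrite /H qform_diag; apply: eq_bigr => i _.
  by rewrite !mxE mulr_suml; apply: eq_bigr => j _; rewrite mxE mulr1.
have H_cols : H = \sum_i \sum_j G i j * x 0 j ^+ 2.
  rewrite H_rows exchange_big; apply: eq_bigr => i _; apply: eq_bigr => j _.
  by rewrite -[in LHS]G_sym mxE.
have cross_le : 2 * qform G x <= H + H.
  rewrite {1}H_rows H_cols -big_split qformE mulr_sumr; apply: ler_sum => i _.
  rewrite -big_split mulr_sumr; apply: ler_sum => j _ /=.
  have := mulr_ge0 (G_ge0 i j) (sqr_ge0 (x 0 i - x 0 j)); nra.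
rewrite /laplacian qformB -/H; lra.
Qed.

Lemma laplacian_sym : (laplacian G)^T = laplacian G.
Proof. by rewrite /laplacian raddfB /= tr_diag_mx G_sym. Qed.

Variables (lambda mu : R).
Hypotheses (lambda_gt0 : 0 < lambda) (mu_ge0 : 0 <= mu).
Local Notation A := (lambda%:M + mu *: laplacian G).

Lemma shifted_laplacian_sym : A^T = A.
Proof. by rewrite raddfD /= tr_scalar_mx linearZ /= laplacian_sym. Qed.

Lemma shifted_laplacian_qform_gt0 x : x != 0 -> 0 < qform A x.
Proof.
move=> x_neq0; rewrite qformD qformZ -scalemx1 qformZ -diag_const_mx.
have x_sqr_gt0 : 0 < qform (diag_mx (const_mx 1)) x.
  by apply: qform_diag_gt0 => // i; rewrite mxE.
have := mulr_ge0 mu_ge0 (laplacian_qform_ge0 x).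
have := mulr_gt0 lambda_gt0 x_sqr_gt0; lra.
Qed.

Lemma shifted_laplacian_diag_dominant i : \sum_(j | j != i) `|A i j| <= A i i.
Proof.
have L_ii : laplacian G i i = \sum_(j | j != i) G i j.
  by rewrite laplacianE eqxx mulr1n (bigD1 i) //= addrAC subrr add0r.
rewrite (eq_bigr (fun j => mu * G i j)) => [|j ji]; last first.
  rewrite !mxE eq_sym (negbTE ji) !mulr0n add0r sub0r mulrN normrN normrM.
  by rewrite !ger0_norm ?G_ge0.
rewrite -mulr_sumr -L_ii [leRHS]mxE [X in X + _]mxE [X in _ + X]mxE eqxx mulr1n.
by rewrite lerDr ltW.
Qed.

End ShiftedLaplacian.

Theorem lemma4p9 (R : rcfType) (n : nat) (Gamma : 'M[R]_n) (lambda mu : R)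
  (Hsym : Gamma^T = Gamma)
  (Hrange : forall i j, 0 <= Gamma i j <= 1)
  (Hdiag : forall i, Gamma i i = 0)
  (Hrow : forall i, exists j, (j != i) && (0 < Gamma i j))
  (Hlambda : 0 < lambda) (Hmu : 0 < mu) :
  let eta : 'cV[R]_n := Gamma *m const_mx 1 in
  let L : 'M[R]_n := diag_mx eta^T - Gamma in
  let A : 'M[R]_n := lambda%:M + mu *: L in
  let Pa : 'M[R]_n := lambda%:M + mu *: diag_mx eta^T in
  let Pb : 'M[R]_n :=
    diag_mx (\row_i Num.sqrt (\sum_j (A i j) ^+ 2)) in
  forall theta lmin lmax,
    eigenvalue (invmx Pb *m A) theta ->
    is_lambda_min (invmx Pa *m A) lmin ->
    is_lambda_max (invmx Pa *m A) lmax ->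
    (Num.sqrt 2)^-1 * lmin <= theta /\ theta <= lmax.
Proof.
move=> eta L A Pa Pb theta lmin lmax.
have Gamma_ge0 i j : 0 <= Gamma i j by case/andP: (Hrange i j).
have -> : Pa = diag_mx (\row_i A i i).
  apply/matrixP => i j; rewrite /Pa /A /L !mxE.
  case: eqVneq => [->|_]; first by rewrite eqxx Hdiag subr0.
  by rewrite !mulr0n mulr0 addr0.
apply: row_norm_preconditioner_eigenvalue_bounds.
- exact: shifted_laplacian_sym.
- exact: shifted_laplacian_qform_gt0 (ltW Hmu).
- exact: shifted_laplacian_diag_dominant (ltW Hmu).
Qed.
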